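(* For $0\le k\le n$, $B(n,k)$ equals the number of snakes $\pi=\pi_1\cdots\pi_n$ of type $B_n$ with $\alpha(\pi)=k$, where $$\alpha(\pi)=\#\{j \text{ odd}:\pi_j>0\}+\#\{j\text{ even}:\pi_j<0\}-\#\{j\text{ odd}:\pi_j<0\}-\#\{j\text{ even}:\pi_j>0\},$$ $j$ ranging over $\{1,\dots,n\}$.
   Context: A signed permutation of $[n]$ is a permutation of $[n]$ with some entries negated ($\bar i=-i$), ordered by $\bar n<\cdots<\bar1<1<\cdots<n$. A snake of type $B_n$ is a signed permutation with $0<\pi_1>\pi_2<\pi_3>\pi_4<\cdots\pi_n$. A labeled ballot path is a lattice path from $(0,0)$ with steps $u=(1,1)$, $d=(1,-1)$ never going below the $x$-axis, each step carrying an integer label between $0$ and its height, where the height of a step is the smaller $y$-coordinate of its endpoints. $B(n,k)$ is the number of labeled ballot paths from $(0,0)$ ending at $(n,k)$. *)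

From HB Require Import structures.
From mathcomp Require Import all_boot all_order all_algebra all_fingroup.
Set Implicit Arguments. Unset Strict Implicit. Unset Printing Implicit Defensive.
Import Order.TTheory GRing.Theory Num.Theory.
Local Open Scope ring_scope.

(* A signed permutation of [n] is encoded by a pair (s, e) with s : 'S_n a
   permutation of {0..n-1} and e : 'I_n -> bool a choice of signs; the
   j-th entry (0-based position j) is  pi_j = (-1)^(e j) * (s j + 1).
   This is a bijection onto signed permutations of [n], whose entries are
   integers, ordered by the usual order of int:  -n < ... < -1 < 1 < ... < n. *)
Definition signed_perm (n : nat) := ('S_n * {ffun 'I_n -> bool})%type.

Definition sp_entry (n : nat) (p : signed_perm n) (j : 'I_n) : int :=
  (if p.2 j then -1 else 1) * ((p.1 j).+1)%:Z.

Definition sp_word (n : nat) (p : signed_perm n) : seq int :=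
  [seq sp_entry p j | j <- enum 'I_n].

Definition alternating (t : seq int) : bool :=
  all (fun i : nat =>
    if odd i then nth 0 t i > nth 0 t i.+1 else nth 0 t i < nth 0 t i.+1)
    (iota 0 (size t).-1).

Definition is_snake (n : nat) (p : signed_perm n) : bool :=
  alternating (0 :: sp_word p).

(* alpha(pi); position j (0-based) corresponds to index j+1, so index j+1 is
   odd iff j is even. *)
Definition alpha (n : nat) (p : signed_perm n) : int :=
  \sum_(j < n)
    (if ~~ odd j then (if 0 < sp_entry p j then 1 else -1)
     else (if sp_entry p j < 0 then 1 else -1)).

(* A labeled path with n steps: steps j (true = u = (1,1), false = d = (1,-1))
   and labels j.  Labels are a priori in 'I_(n.+1); the height is always <= n. *)
Definition labeled_path (n : nat) := ({ffun 'I_n -> bool} * {ffun 'I_n -> 'I_n.+1})%type.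

Definition ycoord (n : nat) (st : {ffun 'I_n -> bool}) (m : nat) : int :=
  \sum_(i < n | (i < m)%N) (if st i then 1 else -1).

Definition step_height (n : nat) (st : {ffun 'I_n -> bool}) (j : 'I_n) : int :=
  Num.min (ycoord st j) (ycoord st j.+1).

Definition is_labeled_ballot_path (n : nat) (k : nat) (q : labeled_path n) : bool :=
  [&& [forall m : 'I_n.+1, 0 <= ycoord q.1 m],
      ycoord q.1 n == k%:Z &
      [forall j : 'I_n, (q.2 j)%:Z <= step_height q.1 j]].

From HB Require Import structures.
From mathcomp Require Import all_boot all_order all_algebra all_fingroup.
From mathcomp Require Import zify.
Set Implicit Arguments. Unset Strict Implicit. Unset Printing Implicit Defensive.
Import Order.TTheory GRing.Theory Num.Theory.
Local Open Scope ring_scope.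

(* Both sides of the theorem are computed by the same recursion
     T(0,k) = [k = 0],   T(n+1,k) = |k| T(n,k-1) + |k+1| T(n,k+1),
   in which k ranges over all integers.

   Flipping the sign of every second entry of a signed permutation
   turns the snake condition 0 < pi_1 > pi_2 < ... into "every two consecutive
   letters of 0 w_1 ... w_n have a positive sum", and alpha into the sum of
   the signs of the w_j.  Every such word of length n+1 arises uniquely by
   inserting a letter +-1 into a word of length n whose letters have been
   pushed one unit away from 0; the number of insertion slots that keep the
   positive-sum property telescopes to sgn_sum w + [the letter is +1].

   Paths.  Splitting off the last step of a labeled ballot path ending at
   height k, an up step from height k-1 admits k labels and a down step from
   height k+1 admits k+1 labels. *)

Ltac sign_cases :=
  repeat match goal with |- context [if ?c then _ else _] => case: (boolP c) => ? end;
  try lia.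

Definition pos_sum (a b : int) : bool := 0 < a + b.

(* Pushes a nonzero integer one unit away from 0 (room for a new letter +-1). *)
Definition stretch (x : int) : int :=
  if 0 < x then x + 1 else if x < 0 then x - 1 else 0.

(* Sign of a nonzero integer; its sum over a word corresponds to alpha. *)
Definition sgn (x : int) : int := if 0 < x then 1 else -1.

Definition sgn_sum (w : seq int) : int := \sum_(x <- w) sgn x.

Definition insert_at (i : nat) (x : int) (l : seq int) : seq int :=
  take i l ++ x :: drop i l.

Definition unit_of (b : bool) : int := if b then -1 else 1.

(* Stretching preserves the sign of a sum, hence the positive-sum property. *)
Lemma pos_sum_stretch a b : pos_sum (stretch a) (stretch b) = pos_sum a b.
Proof. rewrite /pos_sum /stretch; sign_cases; apply/idP/idP; lia. Qed.

Lemma path_stretch x0 w :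
  path pos_sum (stretch x0) (map stretch w) = path pos_sum x0 w.
Proof. by elim: w x0 => [|a w IH] x0 //=; rewrite pos_sum_stretch IH. Qed.

Lemma sgn_stretch a : sgn (stretch a) = sgn a.
Proof. by rewrite /sgn /stretch; case: (ltrgt0P a) => ?; sign_cases. Qed.

Lemma sgn_sum_cat s t : sgn_sum (s ++ t) = sgn_sum s + sgn_sum t.
Proof. exact: big_cat. Qed.

Lemma sgn_sum_stretch w : sgn_sum (map stretch w) = sgn_sum w.
Proof. by rewrite /sgn_sum big_map; apply: eq_bigr => a _; rewrite sgn_stretch. Qed.

Lemma sgn_sum_insert i x w :
  sgn_sum (insert_at i x (map stretch w)) = sgn x + sgn_sum w.
Proof.
rewrite /insert_at sgn_sum_cat /sgn_sum big_cons -!/(sgn_sum _) addrCA.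
by rewrite -sgn_sum_cat cat_take_drop sgn_sum_stretch.
Qed.

Definition appendable (y x : int) : bool := pos_sum (stretch y) x.

Definition fits_between (y a x : int) : bool :=
  appendable y x && pos_sum x (stretch a).

Definition slots (x0 : int) (w : seq int) (x : int) : nat :=
  \sum_(i < (size w).+1) path pos_sum (stretch x0) (insert_at i x (map stretch w)).

Lemma slots_cons x0 a w x : slots x0 (a :: w) x =
  (fits_between x0 a x && path pos_sum a w + pos_sum x0 a * slots a w x)%N.
Proof.
rewrite /slots /= big_ord_recl /= path_stretch -andbA; congr (_ + _)%N.
rewrite big_distrr /=; apply: eq_bigr => i _.
by rewrite /insert_at /= pos_sum_stretch; case: (pos_sum x0 a); rewrite ?mul1n ?mul0n.
Qed.

(* Local identity behind the telescoping slot count: a slot between x0 and a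
   trades the end slot after x0 for the end slot after a, up to sgn a. *)
Lemma fits_between_telescope x0 a b : a != 0 -> pos_sum x0 a ->
  (fits_between x0 a (unit_of b) : int) + appendable a (unit_of b) =
  sgn a + appendable x0 (unit_of b).
Proof.
rewrite /fits_between /appendable /unit_of /pos_sum /stretch /sgn => a0 x0a.
by case: b; case: (ltrgt0P x0) => ?; case: (ltrgt0P a) => ?; sign_cases.
Qed.

Lemma fits_between_blocked x0 a b : a != 0 -> ~~ pos_sum x0 a ->
  ~~ fits_between x0 a (unit_of b).
Proof.
rewrite /fits_between /appendable /unit_of /pos_sum /stretch => a0 x0a.
by case: b; case: (ltrgt0P x0) => ?; case: (ltrgt0P a) => ?; sign_cases.
Qed.

Lemma slots_unit x0 w b : all (fun y => y != 0) w ->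
  (slots x0 w (unit_of b) : int) =
  if path pos_sum x0 w then sgn_sum w + appendable x0 (unit_of b) else 0.
Proof.
elim: w x0 => [|a w IH] x0 /=.
  by rewrite /slots big_ord1 /insert_at /= andbT /sgn_sum big_nil add0r.
case/andP=> a0 w0; rewrite slots_cons PoszD PoszM (IH _ w0).
rewrite /sgn_sum big_cons -/(sgn_sum w).
case: (path pos_sum a w); last by rewrite !andbF mulr0.
rewrite andbT; case: (boolP (pos_sum x0 a)) => x0a /=.
  by have := fits_between_telescope b a0 x0a; lia.
by rewrite (negbTE (fits_between_blocked b a0 x0a)); lia.
Qed.

Definition is_snake_word (k : int) (w : seq int) : bool :=
  path pos_sum 0 w && (sgn_sum w == k).

Lemma snake_insertions_of_unit k w b :
  (\sum_(i < (size w).+1) is_snake_word k (insert_at i (unit_of b) (map stretch w)))%N =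
  (((sgn (unit_of b) + sgn_sum w)%R == k) * slots 0 w (unit_of b))%N.
Proof.
rewrite /slots big_distrr /=; apply: eq_bigr => i _.
rewrite /is_snake_word sgn_sum_insert [stretch 0]/=.
by case: (_ == k); rewrite ?mul1n ?andbT ?andbF.
Qed.

(* Snake words have nonnegative sign sum, since slot counts are natural. *)
Lemma snake_sgn_sum_ge0 w : all (fun y => y != 0) w -> path pos_sum 0 w ->
  0 <= sgn_sum w.
Proof.
move=> w0 w_snake; have := slots_unit 0 true w0.
by rewrite w_snake /appendable /unit_of /pos_sum /=; lia.
Qed.

Lemma snake_insertions k w : all (fun y => y != 0) w ->
  (\sum_(i < (size w).+1) \sum_(b : bool)
      is_snake_word k (insert_at i (unit_of b) (map stretch w)))%N =
  (is_snake_word (k - 1)%R w * absz k + is_snake_word (k + 1)%R w * absz (k + 1)%R)%N.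
Proof.
move=> w0; rewrite exchange_big big_bool addnC !snake_insertions_of_unit.
apply/eqP; rewrite -eqz_nat !PoszD !PoszM !slots_unit //.
rewrite /is_snake_word /appendable /unit_of /sgn /pos_sum /=.
case: (boolP (path pos_sum 0 w)) => [w_snake|_]; last by rewrite !mulr0.
have := snake_sgn_sum_ge0 w0 w_snake; move: (sgn_sum w) => s s_ge0.
by apply/eqP; sign_cases.
Qed.

Lemma alternating_pos_sum (pi w : seq int) : size pi = size w ->
  (forall j, nth 0 pi j = (if odd j then -1 else 1) * nth 0 w j) ->
  alternating (0 :: pi) = path pos_sum 0 w.
Proof.
move=> size_pi nth_pi.
have step i : (if odd i then pi`_i < (0 :: pi)`_i else (0 :: pi)`_i < pi`_i) =
              pos_sum (0 :: w)`_i w`_i.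
  case: i => [|i] /=; rewrite /pos_sum !nth_pi /=; first by rewrite mul1r add0r.
  by case: (odd i) => /=; apply/idP/idP; lia.
apply/allP/(pathP 0) => [alt i lt_i | path_w i]; last first.
  by rewrite mem_iota /= add0n size_pi => /path_w; rewrite -step.
by have := alt i; rewrite mem_iota /= add0n size_pi lt_i step => /(_ isT).
Qed.

Definition signed_word n (s : 'S_n) (f : {ffun 'I_n -> bool}) : seq int :=
  [seq unit_of (f j) * (s j).+1%:Z | j <- enum 'I_n].

Lemma size_signed_word n (s : 'S_n) f : size (signed_word s f) = n.
Proof. by rewrite size_map size_enum_ord. Qed.

Lemma nth_signed_word n (s : 'S_n) f (j : 'I_n) :
  nth 0 (signed_word s f) j = unit_of (f j) * (s j).+1%:Z.
Proof. by rewrite (nth_map j) ?size_enum_ord // nth_ord_enum. Qed.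

Lemma signed_word_nonzero n (s : 'S_n) f : all (fun y => y != 0) (signed_word s f).
Proof. by apply/allP => x /mapP [j _ ->]; rewrite /unit_of; case: (f j); lia. Qed.

Definition parity_twist n (f : {ffun 'I_n -> bool}) : {ffun 'I_n -> bool} :=
  [ffun j : 'I_n => f j (+) odd j].

Lemma parity_twistK n : involutive (@parity_twist n).
Proof. by move=> f; apply/ffunP => j; rewrite !ffunE addbK. Qed.

Lemma snake_signed_word n (s : 'S_n) f :
  is_snake (s, parity_twist f) = path pos_sum 0 (signed_word s f).
Proof.
apply: alternating_pos_sum; first by rewrite size_signed_word size_map size_enum_ord.
move=> j; case: (ltnP j n) => [lt_jn | le_nj]; last first.
  by rewrite !nth_default ?mulr0 ?size_signed_word // size_map size_enum_ord.
have -> : j = Ordinal lt_jn by [].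
rewrite (nth_map (Ordinal lt_jn)) ?size_enum_ord // nth_ord_enum nth_signed_word.
by rewrite /sp_entry ffunE /unit_of; case: (f _); case: (odd _) => /=; lia.
Qed.

Lemma alpha_signed_word n (s : 'S_n) f :
  alpha (s, parity_twist f) = sgn_sum (signed_word s f).
Proof.
rewrite /alpha /sgn_sum big_map big_enum /=; apply: eq_bigr => j _.
rewrite /sp_entry /= ffunE /unit_of /sgn.
by case: (f j); case: (odd j) => /=; sign_cases.
Qed.

Definition snake_count n (k : int) : nat :=
  (\sum_(s : 'S_n) \sum_(f : {ffun 'I_n -> bool}) is_snake_word k (signed_word s f))%N.

Lemma card_snakes n (k : int) :
  #|[set p : signed_perm n | is_snake p && (alpha p == k)]| = snake_count n k.
Proof.
pose snake_alpha (p : signed_perm n) := nat_of_bool (is_snake p && (alpha p == k)).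
rewrite -sum1_card big_mkcond /= (eq_bigr snake_alpha);
  last by move=> p _; rewrite inE /snake_alpha; case: (_ && _).
rewrite -(pair_big predT predT (fun s e => snake_alpha (s, e))).
apply: eq_bigr => s _; rewrite (reindex_inj (inv_inj (@parity_twistK n))) /=.
by apply: eq_bigr => f _; rewrite /snake_alpha snake_signed_word alpha_signed_word.
Qed.

(* A permutation of [n+1] is determined by the position i sent to 0 and the
   permutation of [n] it induces on the other positions. *)
Lemma lift_perm_bij n :
  bijective (fun p : 'I_n.+1 * 'S_n => lift_perm p.1 ord0 p.2).
Proof.
apply: inj_card_bij; last by rewrite card_prod card_ord !card_Sn factS.
move=> [i s] [j t] /= eq_st.
have eq_ij : i = j.
  have := congr1 (fun u : 'S_n.+1 => u^-1%g ord0) eq_st.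
  by rewrite /= !lift_permV !lift_perm_id.
subst j; congr pair; apply/permP => k; apply: (@lift_inj _ ord0).
by rewrite -(lift_perm_lift i ord0 s) -(lift_perm_lift i ord0 t) eq_st.
Qed.

Lemma sum_lift_perm n (F : 'S_n.+1 -> nat) :
  (\sum_(s : 'S_n.+1) F s = \sum_(i : 'I_n.+1) \sum_(s : 'S_n) F (lift_perm i ord0 s))%N.
Proof.
rewrite pair_big /=; case: (lift_perm_bij n) => g liftK_ gK.
by rewrite (reindex _ (onW_bij _ (Bijective liftK_ gK))).
Qed.

Definition ffun_insert n (i : 'I_n.+1) (b : bool) (f : {ffun 'I_n -> bool}) :
  {ffun 'I_n.+1 -> bool} :=
  [ffun j => if unlift i j is Some k then f k else b].

Lemma sum_ffun_insert n (i : 'I_n.+1) (F : {ffun 'I_n.+1 -> bool} -> nat) :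
  (\sum_(f : {ffun 'I_n.+1 -> bool}) F f =
   \sum_(b : bool) \sum_(f : {ffun 'I_n -> bool}) F (ffun_insert i b f))%N.
Proof.
rewrite pair_big /= (reindex (fun p => ffun_insert i p.1 p.2)) //.
exists (fun f : {ffun 'I_n.+1 -> bool} => (f i, [ffun k => f (lift i k)])).
  move=> [b f] _ /=; congr pair; first by rewrite ffunE unlift_none.
  by apply/ffunP => k; rewrite !ffunE liftK.
move=> f _; apply/ffunP => j; rewrite ffunE.
by case: (unliftP i j) => [k|] ->; rewrite ?ffunE.
Qed.

Lemma nth_insert_at (i : nat) x l j : (i <= size l)%N ->
  nth 0 (insert_at i x l) j =
  if (j < i)%N then nth 0 l j else if j == i then x else nth 0 l j.-1.
Proof.
move=> le_il; rewrite /insert_at nth_cat size_take_min (minn_idPl le_il).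
case: ltnP => [lt_ji | le_ij]; first by rewrite nth_take.
case: eqP => [->|ne_ji]; first by rewrite subnn.
have -> : (j - i = (j.-1 - i).+1)%N by lia.
by rewrite /= nth_drop; congr nth; lia.
Qed.

Lemma stretch_unit_of b (m : nat) :
  stretch (unit_of b * m.+1%:Z) = unit_of b * m.+2%:Z.
Proof. by rewrite /unit_of /stretch; case: b; sign_cases. Qed.

(* Inserting a new smallest entry at position i of a signed permutation is
   the insertion of +-1 into the stretched word. *)
Lemma signed_word_insert n (i : 'I_n.+1) b (s : 'S_n) f :
  signed_word (lift_perm i ord0 s) (ffun_insert i b f) =
  insert_at i (unit_of b) (map stretch (signed_word s f)).
Proof.
have le_i : (i <= size (map stretch (signed_word s f)))%N.
  by rewrite size_map size_signed_word -ltnS.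
apply: (@eq_from_nth _ 0).
  rewrite size_signed_word size_cat /= size_take_min size_drop size_map.
  by rewrite size_signed_word; lia.
rewrite size_signed_word => j lt_j; have -> : j = Ordinal lt_j by [].
rewrite nth_signed_word nth_insert_at // ffunE.
case: (unliftP i (Ordinal lt_j)) => [k|] -> /=; last first.
  by rewrite lift_perm_id ltnn eqxx mulr1.
have nth_k : (map stretch (signed_word s f))`_k = unit_of (f k) * (s k).+2%:Z.
  by rewrite (nth_map 0) ?size_signed_word // nth_signed_word stretch_unit_of.
rewrite lift_perm_lift /= /bump; case: (leqP i k) => [le_ik | lt_ki] /=.
- have [-> ->] : (k.+1 < i)%N = false /\ (k.+1 == i) = false by split; lia.
  by rewrite add0n add1n nth_k.
- by rewrite lt_ki nth_k.
Qed.

Lemma snake_count_rec n k : snake_count n.+1 k =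
  (absz k * snake_count n (k - 1)%R + absz (k + 1)%R * snake_count n (k + 1)%R)%N.
Proof.
rewrite /snake_count sum_lift_perm exchange_big /= !big_distrr -big_split /=.
apply: eq_bigr => s _; rewrite !big_distrr -big_split /=.
under eq_bigr => i _ do rewrite (sum_ffun_insert i) exchange_big /=.
rewrite exchange_big /=; apply: eq_bigr => f _.
under eq_bigr => i _ do under eq_bigr => b _ do rewrite signed_word_insert.
have := snake_insertions k (signed_word_nonzero s f); rewrite size_signed_word => ->.
by rewrite mulnC [(is_snake_word _ _ * _)%N]mulnC.
Qed.

Definition step_value (b : bool) : int := if b then 1 else -1.

Lemma widen_ord_max n (i : 'I_n) : widen_ord (leqnSn n) i = lift ord_max i.
Proof. by apply: val_inj; rewrite /= /bump leqNgt ltn_ord. Qed.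

Lemma ycoord_snoc n b (st : {ffun 'I_n -> bool}) (m : nat) :
  ycoord (ffun_insert ord_max b st) m =
  ycoord st m + (if (n < m)%N then step_value b else 0).
Proof.
rewrite /ycoord big_mkcond big_ord_recr /= ffunE unlift_none; congr (_ + _).
rewrite [RHS]big_mkcond; apply: eq_bigr => i _.
by rewrite widen_ord_max ffunE liftK.
Qed.

Lemma ycoord_end n (st : {ffun 'I_n -> bool}) m : (n <= m)%N -> ycoord st m = ycoord st n.
Proof. by move=> le_nm; apply: eq_bigl => i; rewrite ltn_ord (leq_trans (ltn_ord i) le_nm). Qed.

Lemma ycoord_le n (st : {ffun 'I_n -> bool}) m : ycoord st m <= n%:Z.
Proof.
apply: (le_trans (y := \sum_(i < n) (1 : int))); last by rewrite sumr_const card_ord; lia.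
rewrite /ycoord big_mkcond; apply: ler_sum => i _.
by case: ifP => _ //; case: (st i).
Qed.

Definition is_ballot n (st : {ffun 'I_n -> bool}) : bool :=
  [forall m : 'I_n.+1, 0 <= ycoord st m].

(* Number of labelings: step j admits (height of step j) + 1 labels. *)
Definition height_weight n (st : {ffun 'I_n -> bool}) : nat :=
  \prod_(j < n) (absz (step_height st j)).+1.

Definition path_weight n (k : int) : nat :=
  \sum_(st : {ffun 'I_n -> bool})
     ((is_ballot st && (ycoord st n == k)) * height_weight st)%N.

Lemma ballot_snoc n b (st : {ffun 'I_n -> bool}) :
  is_ballot (ffun_insert ord_max b st) =
  is_ballot st && (0 <= ycoord st n + step_value b).
Proof.
apply/forallP/andP => [ballot | [/forallP ballot end_ge0] m].
- split; last first.
    by have := ballot ord_max; rewrite ycoord_snoc ltnSn (ycoord_end st (leqnSn n)).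
  apply/forallP => m; have := ballot (widen_ord (leqnSn _) m).
  by rewrite ycoord_snoc /= ltnNge -ltnS ltn_ord addr0.
- rewrite ycoord_snoc; case: (ltnP n m) => [lt_nm | le_mn].
    by rewrite ycoord_end // ltnW.
  by rewrite addr0; apply: (ballot (Ordinal (le_mn : (m < n.+1)%N))).
Qed.

Lemma height_weight_snoc n b (st : {ffun 'I_n -> bool}) :
  height_weight (ffun_insert ord_max b st) =
  (height_weight st *
   (absz (Num.min (ycoord st n) (ycoord st n + step_value b)%R)).+1)%N.
Proof.
rewrite /height_weight big_ord_recr /= /step_height !ycoord_snoc ltnn ltnSn addr0.
rewrite (ycoord_end st (leqnSn n)); congr (_ * _)%N; apply: eq_bigr => j _.
rewrite !ycoord_snoc /= [(n < j)%N]ltnNge [(n < j.+1)%N]ltnNge.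
by rewrite (ltnW (ltn_ord j)) ltn_ord !addr0.
Qed.

Lemma last_step_factor (Y k : int) (b : bool) : 0 <= Y ->
  (((0 <= Y + step_value b) && (Y + step_value b == k))%R *
     (absz (Num.min Y (Y + step_value b)%R)).+1)%N =
  ((Y == if b then k - 1 else k + 1)%R * absz (if b then k else k + 1)%R)%N.
Proof.
move=> Y_ge0; rewrite /step_value.
case: b; [rewrite min_l ?lerDl // | rewrite min_r ?gerDl //];
  case: (boolP (0 <= _)) => ?; case: eqP => ?; case: eqP => ? /=; lia.
Qed.

Lemma path_weight_rec n k : path_weight n.+1 k =
  (absz k * path_weight n (k - 1)%R + absz (k + 1)%R * path_weight n (k + 1)%R)%N.
Proof.
rewrite /path_weight (sum_ffun_insert ord_max) big_bool /= !big_distrr /=.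
congr (_ + _)%N; apply: eq_bigr => st _;
  rewrite ballot_snoc ycoord_snoc ltnSn (ycoord_end st (leqnSn n)) height_weight_snoc;
  (case: (boolP (is_ballot st)) => ballot; last by rewrite !mul0n muln0);
  rewrite !andTb mulnCA last_step_factor ?(forallP ballot ord_max) //=; lia.
Qed.

Lemma step_height_bounds n (st : {ffun 'I_n -> bool}) (j : 'I_n) :
  is_ballot st -> 0 <= step_height st j <= n%:Z.
Proof.
move=> /forallP ballot; have := ballot (widen_ord (leqnSn n) j).
have := ballot (lift ord0 j); rewrite /step_height /= /bump leq0n add1n => ge0_r ge0_l.
by rewrite le_min ge0_l ge0_r ge_min ycoord_le.
Qed.

Lemma card_ord_le m (c : nat) : (c < m)%N -> #|[pred x : 'I_m | (x <= c)%N]| = c.+1.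
Proof.
move=> lt_cm; rewrite -sum1_card.
rewrite (eq_bigl (fun i : 'I_m => (i < c.+1)%N)) // -(big_ord_widen _ (fun _ => 1%N) lt_cm).
by rewrite sum1_card card_ord.
Qed.

Lemma card_labels n (st : {ffun 'I_n -> bool}) : is_ballot st ->
  #|[pred lab : {ffun 'I_n -> 'I_n.+1} | [forall j, (lab j)%:Z <= step_height st j]]| =
  height_weight st.
Proof.
move=> ballot; pose F j := [pred x : 'I_n.+1 | (x : nat)%:Z <= step_height st j].
rewrite (@eq_card _ _ (family F)); last by move=> lab; rewrite !inE.
rewrite card_family foldrE big_map big_enum /=; apply: eq_bigr => j _.
have /andP[h_ge0 h_le] := step_height_bounds j ballot.
rewrite -(@card_ord_le n.+1 (absz (step_height st j))); last by lia.
by apply: eq_card => x; rewrite !inE; lia.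
Qed.

Lemma card_ballot_paths n (k : nat) :
  #|[set q : labeled_path n | is_labeled_ballot_path k q]| = path_weight n k%:Z.
Proof.
rewrite -sum1_card big_mkcond /=.
transitivity (\sum_(st : {ffun 'I_n -> bool}) \sum_(lab : {ffun 'I_n -> 'I_n.+1})
                nat_of_bool (is_labeled_ballot_path k (st, lab)))%N.
  by rewrite pair_big; apply: eq_bigr => -[st lab] _; rewrite inE.
apply: eq_bigr => st _; rewrite /is_labeled_ballot_path /=.
case: (boolP (is_ballot st && (ycoord st n == k))) => [/andP[ballot end_k] | not_path].
  rewrite mul1n -(card_labels ballot) -sum1_card [RHS]big_mkcond.
  apply: eq_bigr => lab _; rewrite inE -/(is_ballot st) ballot end_k.
  by case: [forall _, _].
by rewrite mul0n big1 // => lab _; rewrite -/(is_ballot st) andbA (negbTE not_path).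
Qed.

Lemma snake_count0 k : snake_count 0 k = (0 == k).
Proof.
rewrite /snake_count (eq_bigr (fun _ => nat_of_bool (0 == k))) ?sum_nat_const ?card_Sn ?mul1n //.
move=> s _; rewrite (eq_bigr (fun _ => nat_of_bool (0 == k))) ?sum_nat_const.
  by rewrite card_ffun card_ord card_bool /= mul1n.
by move=> f _; rewrite /is_snake_word (size0nil (size_signed_word s f)) /sgn_sum big_nil.
Qed.

Lemma path_weight0 k : path_weight 0 k = (0 == k).
Proof.
have ycoord0 (st : {ffun 'I_0 -> bool}) m : ycoord st m = 0 by rewrite /ycoord big_ord0.
rewrite /path_weight (eq_bigr (fun _ => nat_of_bool (0 == k))) ?sum_nat_const.
  by rewrite card_ffun card_ord card_bool /= mul1n.
move=> st _; rewrite /height_weight big_ord0 muln1 ycoord0.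
by rewrite (_ : is_ballot st) //; apply/forallP => m; rewrite ycoord0.
Qed.

Definition ballot_recursion (T : nat -> int -> nat) : Prop :=
  (forall k, T 0%N k = (0 == k)) /\
  (forall n k, T n.+1 k = (absz k * T n (k - 1)%R + absz (k + 1)%R * T n (k + 1)%R)%N).

Lemma ballot_recursion_unique T1 T2 :
  ballot_recursion T1 -> ballot_recursion T2 -> forall n k, T1 n k = T2 n k.
Proof.
move=> [T1_0 T1_S] [T2_0 T2_S]; elim=> [|n IH] k; first by rewrite T1_0 T2_0.
by rewrite T1_S T2_S !IH.
Qed.

Local Close Scope ring_scope.

Theorem theorem4p5 (n k : nat) (hk : (k <= n)%N) :
  #|[set q : labeled_path n | is_labeled_ballot_path k q]| =
  #|[set p : signed_perm n | is_snake p && (alpha p == k%:Z)%R]|.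
Proof.
rewrite card_ballot_paths card_snakes; apply: ballot_recursion_unique.
- by split; [exact: path_weight0 | exact: path_weight_rec].
- by split; [exact: snake_count0 | exact: snake_count_rec].
Qed.
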